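(* Let $Z$ be a domain, $\pi$ a probability distribution on $Z$, $0\le a\le b$, $\mathcal{F}$ a family of functions from $Z$ to $[a,b]$, $p\in(0,1)$ and $n\ge1$. The function $g:Z^n\to\mathbb{R}$, $g(X_1,\dots,X_n)=\mathsf{r}\mathsf{R}(\mathcal{F},\{X_1,\dots,X_n\},p)$, satisfies the bounded difference inequality with constants $c_i=\frac{|b-a|}{np}$, $1\le i\le n$.
   Context: For $\sigma_1,\dots,\sigma_n$ independent Rademacher random variables (each $\pm1$ with probability $1/2$), $\mathsf{r}\mathsf{R}(\mathcal{F},\{X_1,\dots,X_n\},p)=\mathbb{E}_\sigma\left[\sup_{f\in\mathcal{F}}\frac{1}{n\max\{p,\mathbb{E}_\pi[f]\}}\sum_{i=1}^n\sigma_if(X_i)\right]$, expectation over the $\sigma_i$ only. A function $g:\mathcal{X}^n\to\mathbb{R}$ satisfies the bounded difference inequality with nonnegative constants $c_1,\dots,c_n$ if for every $i$, $\sup_{x_1,\dots,x_n,x_i'\in\mathcal{X}}|g(x_1,\dots,x_n)-g(x_1,\dots,x_{i-1},x_i',x_{i+1},\dots,x_n)|\le c_i$. *)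

From HB Require Import structures.
From mathcomp Require Import all_boot all_order all_algebra.
From mathcomp Require Import all_classical all_reals all_analysis.
Set Implicit Arguments. Unset Strict Implicit. Unset Printing Implicit Defensive.
Import Order.TTheory GRing.Theory Num.Theory.
Local Open Scope classical_set_scope.
Local Open Scope ring_scope.

Definition rad_sign {R : realType} (b : bool) : R := if b then -1 else 1.

(* Normalized (relative) Rademacher complexity rR(F, {x_1..x_n}, p):
   the expectation over n i.i.d. Rademacher signs is the uniform average
   over all sign vectors s : 'I_n -> bool. *)
Definition rR {d} {T : measurableType d} {R : realType} (P : probability T R)
  (F : set (T -> R)) (n : nat) (x : 'I_n -> T) (p : R) : R :=
  (2%:R ^- n) * \sum_(s : {ffun 'I_n -> bool})
     sup [set ((n%:R * Num.max p (fine 'E_P[f]))^-1 *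
               \sum_(i < n) rad_sign (s i) * f (x i)) | f in F].

Definition replace_at {T : Type} {n : nat} (x : 'I_n -> T) (i : 'I_n) (z : T)
  : 'I_n -> T := fun j => if j == i then z else x j.

Definition bounded_difference {T : Type} {R : realType} {n : nat}
  (g : ('I_n -> T) -> R) (c : 'I_n -> R) : Prop :=
  forall (i : 'I_n) (x : 'I_n -> T) (z : T), `|g x - g (replace_at x i z)| <= c i.

From HB Require Import structures.
From mathcomp Require Import all_boot all_order all_algebra.
From mathcomp Require Import all_classical all_reals all_analysis.
From mathcomp Require Import lra.
Import Order.TTheory GRing.Theory Num.Theory.
Local Open Scope classical_set_scope.
Local Open Scope ring_scope.

(* Changing one sample point moves every normalized Rademacher sum by at most
   |b - a| / (n p), because the normalizing factor does not depend on the
   sample and is at most 1 / (n p). Suprema over F of uniformly bounded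
   families inherit this bound, and so does the average over sign vectors. *)

Lemma sup_image_dist (R : realType) (U : Type) (S : set U) (g h : U -> R) (c B : R) :
  0 <= c -> (forall f, S f -> `|g f - h f| <= c) ->
  (forall f, S f -> g f <= B) -> (forall f, S f -> h f <= B) ->
  `|sup (g @` S) - sup (h @` S)| <= c.
Proof.
move=> c0 gh_c gB hB.
have [->|/set0P [f0 Sf0]] := eqVneq S set0.
  by rewrite !image_set0 subrr normr0.
have sup_le_shift (u v : U -> R) : (forall f, S f -> u f <= v f + c) ->
    (forall f, S f -> v f <= B) -> sup (u @` S) <= sup (v @` S) + c.
  move=> uv vB; apply: ge_sup; first by exists (u f0), f0.
  move=> _ [f Sf <-]; apply: le_trans (uv f Sf) _; rewrite lerD2r.
  by apply: ub_le_sup; [exists B => _ [g' Sg' <-]; exact: vB | exists f].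
rewrite ler_distl; apply/andP; split.
- rewrite lerBlDr; apply: sup_le_shift => // f Sf.
  by have := gh_c f Sf; rewrite ler_distl lerBlDr => /andP[].
- by apply: sup_le_shift => // f Sf; have := gh_c f Sf; rewrite ler_distl => /andP[_].
Qed.

Lemma normr_avg_dist (R : realType) (S : finType) (u v : S -> R) (c : R) :
  0 <= c -> (forall s, `|u s - v s| <= c) ->
  `|#|S|%:R^-1 * \sum_s u s - #|S|%:R^-1 * \sum_s v s| <= c.
Proof.
move=> c_ge0 uv_c; have [S0|S_gt0] := posnP #|S|.
  by rewrite S0 invr0 !mul0r subrr normr0.
rewrite -mulrBr -sumrB normrM ger0_norm ?invr_ge0 //.
rewrite ler_pdivrMl ?ltr0n //; apply: le_trans (ler_norm_sum _ _ _) _.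
by rewrite -sum1_card natr_sum mulr_suml; apply: ler_sum => s _; rewrite mul1r.
Qed.

Lemma card_sign_vectors (n : nat) : #|{ffun 'I_n -> bool}| = (2 ^ n)%N.
Proof. by rewrite card_ffun card_bool card_ord. Qed.

Lemma normr_rad_signM (R : realType) (s : bool) (y : R) : `|rad_sign s * y| = `|y|.
Proof. by case: s; rewrite /rad_sign ?mulN1r ?mul1r ?normrN. Qed.

Lemma rad_sum_replace_at (R : realType) (T : Type) (n : nat) (s : 'I_n -> bool)
    (f : T -> R) (x : 'I_n -> T) (i : 'I_n) (z : T) :
  `|\sum_(j < n) rad_sign (s j) * f (x j)
    - \sum_(j < n) rad_sign (s j) * f (replace_at x i z j)| = `|f (x i) - f z|.
Proof.
rewrite -sumrB (bigD1 i) //= big1 => [|j /negbTE ji]; last first.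
  by rewrite /replace_at ji subrr.
by rewrite addr0 /replace_at eqxx -mulrBr normr_rad_signM.
Qed.

Section NormalizedRademacher.
Variables (d : measure_display) (T : measurableType d) (R : realType).
Variables (P : probability T R) (F : set (T -> R)) (a b p : R) (n : nat).
Hypothesis a_ge0 : 0 <= a.
Hypothesis F_range : forall f, F f -> forall z, a <= f z <= b.
Hypothesis p_gt0 : 0 < p.
Hypothesis n_gt0 : (0 < n)%N.

Let weight (f : T -> R) := (n%:R * Num.max p (fine 'E_P[f]))^-1.

Let rad_term (s : 'I_n -> bool) (x : 'I_n -> T) (f : T -> R) :=
  weight f * \sum_(j < n) rad_sign (s j) * f (x j).

Let np_gt0 : 0 < n%:R * p. Proof. by rewrite mulr_gt0 ?ltr0n. Qed.

Lemma weight_gt0 f : 0 < weight f.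
Proof.
by rewrite invr_gt0 mulr_gt0 ?ltr0n // (lt_le_trans p_gt0) // le_max lexx.
Qed.

Lemma weight_le f : weight f <= (n%:R * p)^-1.
Proof.
have p_le_max : p <= Num.max p (fine 'E_P[f]) by rewrite le_max lexx.
rewrite lef_pV2 ?posrE ?ler_pM2l ?ltr0n // mulr_gt0 ?ltr0n //.
exact: lt_le_trans p_le_max.
Qed.

Lemma rad_term_le s x f : F f -> rad_term s x f <= (n%:R * p)^-1 * (n%:R * b).
Proof.
move=> Ff; apply: le_trans (ler_norm _) _.
rewrite normrM gtr0_norm ?weight_gt0 //.
apply: ler_pM; [exact/ltW/weight_gt0 | exact: normr_ge0 | exact: weight_le |].
have -> : n%:R * b = \sum_(j < n) b by rewrite sumr_const card_ord mulr_natl.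
apply: le_trans (ler_norm_sum _ _ _) _; apply: ler_sum => j _.
have /andP[fa fb] := F_range _ Ff (x j).
by rewrite normr_rad_signM ger0_norm // (le_trans a_ge0).
Qed.

Lemma rad_term_replace_at s x i z f : F f ->
  `|rad_term s x f - rad_term s (replace_at x i z) f| <= `|b - a| / (n%:R * p).
Proof.
move=> Ff; rewrite /rad_term -mulrBr normrM gtr0_norm ?weight_gt0 //.
rewrite rad_sum_replace_at mulrC.
apply: ler_pM; [exact: normr_ge0 | exact/ltW/weight_gt0 | | exact: weight_le].
have /andP[h1 h2] := F_range _ Ff (x i); have /andP[h3 h4] := F_range _ Ff z.
by rewrite ler_distl ger0_norm; lra.
Qed.

Lemma sup_rad_term_replace_at s x i z :
  `|sup (rad_term s x @` F) - sup (rad_term s (replace_at x i z) @` F)|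
    <= `|b - a| / (n%:R * p).
Proof.
apply: sup_image_dist (rad_term_replace_at s x i z) (rad_term_le s x)
  (rad_term_le s (replace_at x i z)).
exact: divr_ge0 (normr_ge0 _) (ltW np_gt0).
Qed.

End NormalizedRademacher.

Theorem lemma6 (d : measure_display) (T : measurableType d) (R : realType)
  (P : probability T R) (a b : R) (F : set (T -> R)) (p : R) (n : nat) :
  0 <= a -> a <= b ->
  (forall f, F f -> measurable_fun setT f) ->
  (forall f, F f -> forall z, a <= f z <= b) ->
  0 < p < 1 -> (1 <= n)%N ->
  bounded_difference (fun x : 'I_n -> T => rR P F x p)
                     (fun _ => `|b - a| / (n%:R * p)).
Proof.
move=> a_ge0 _ _ F_range /andP[p_gt0 _] n_gt0 i x z.
rewrite /rR -natrX -card_sign_vectors.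
apply: normr_avg_dist => [|s]; first by rewrite divr_ge0 // ltW // mulr_gt0 ?ltr0n.
exact: sup_rad_term_replace_at a_ge0 F_range p_gt0 n_gt0 _ _ _ _.
Qed.
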